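(* For all integers $n \ge 3$ and all $r \in \{0,1,2\}$, \[\mathrm{size}(\mathrm{MOD}_n^{3,r}) \le 3n-5-[(n+r) \equiv 0 \bmod 3]\,,\] where $[S]$ denotes $1$ if the statement $S$ is true and $0$ otherwise.
   Context: A Boolean straight line program of size $s$ on input variables $x_1,\dots,x_n$ is a sequence of $s$ instructions, each of the form $g \gets h \circ k$ where $\circ$ is an arbitrary binary Boolean operation (any of the 16 functions $\{0,1\}^2\to\{0,1\}$) and each operand $h,k$ is either an input variable or the result of an earlier instruction; designated instructions are outputs, and the program computes a function in the natural way (equivalently, a Boolean circuit with fan-in-two gates over the full binary basis). For a Boolean function $f$, $\mathrm{size}(f)$ is the minimum size of a straight line program computing $f$. For integers $m\ge 2$ and $r$, $\mathrm{MOD}_n^{m,r}\colon\{0,1\}^n\to\{0,1\}$ is defined by $\mathrm{MOD}_n^{m,r}(x_1,\dots,x_n)=1$ if $x_1+\dots+x_n \equiv r \pmod m$ and $0$ otherwise. *)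

From mathcomp Require Import all_boot.
Set Implicit Arguments. Unset Strict Implicit. Unset Printing Implicit Defensive.

(* Wires of a program on n inputs: index i < n is the input variable x_(i+1);
   index n + j is the result of instruction j (0-based). *)

Record instr := Instr { op : bool -> bool -> bool; arg1 : nat; arg2 : nat }.

Record slp := SLP { instrs : seq instr; out : nat }.

Definition slp_size (P : slp) : nat := size (instrs P).

Definition wf_slp (n : nat) (P : slp) : Prop :=
  (forall j, j < size (instrs P) ->
     arg1 (nth (Instr (fun _ _ => false) 0 0) (instrs P) j) < n + j /\
     arg2 (nth (Instr (fun _ _ => false) 0 0) (instrs P) j) < n + j)
  /\ out P < size (instrs P).

Definition wire_values (n : nat) (P : slp) (x : n.-tuple bool) : seq bool :=
  foldl (fun vs g => rcons vs (op g (nth false vs (arg1 g)) (nth false vs (arg2 g))))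
        (tval x) (instrs P).

Definition slp_eval (n : nat) (P : slp) (x : n.-tuple bool) : bool :=
  nth false (wire_values P x) (n + out P).

Definition computes (n : nat) (P : slp) (f : n.-tuple bool -> bool) : Prop :=
  wf_slp n P /\ forall x, slp_eval P x = f x.

(* size(f) <= s : some straight line program of size at most s computes f
   (size(f) is the minimum size of such a program). *)
Definition circuit_size_le (n : nat) (f : n.-tuple bool -> bool) (s : nat) : Prop :=
  exists P, @computes n P f /\ slp_size P <= s.

Definition MODf (n m r : nat) (x : n.-tuple bool) : bool :=
  count id x == r %[mod m].

From mathcomp Require Import all_boot zify.

(* A pair of wires (a, b) encodes the residue code3 a b in {0, 1, 2}.  Three
   gates, (a, b) |-> (b (+) x, ~~ (b || (a (+) x))), absorb one input bit x
   and add x + 1 to the encoded residue.  One gate x1 (+) x2 starts the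
   counter at (x1, x1 (+) x2); absorbing x3, ..., x_(n-1) costs 3(n - 3) gates
   and leaves the residue c + (n - 3), where c = x1 + ... + x_(n-1).  Testing
   c + (n - 3) + x_n = n + r (mod 3) then costs two gates when n + r = 0
   (mod 3) and three otherwise, for 3n - 5 - [n + r = 0 (mod 3)] gates. *)

Definition exec_instr (vs : seq bool) (g : instr) : seq bool :=
  rcons vs (op g (nth false vs (arg1 g)) (nth false vs (arg2 g))).

Definition run (vs : seq bool) (l : seq instr) : seq bool := foldl exec_instr vs l.

Lemma run_cat vs l1 l2 : run vs (l1 ++ l2) = run (run vs l1) l2.
Proof. exact: foldl_cat. Qed.

Lemma size_run vs l : size (run vs l) = size vs + size l.
Proof.
elim: l vs => [|g l IHl] vs /=; first by rewrite addn0.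
by rewrite IHl size_rcons addSnnS.
Qed.

Lemma nth_run vs l i : i < size vs -> nth false (run vs l) i = nth false vs i.
Proof.
elim: l vs => [|g l IHl] vs //= lt_i.
by rewrite IHl ?nth_rcons ?lt_i // size_rcons ltnW.
Qed.

Fixpoint wf_instrs (base : nat) (l : seq instr) : bool :=
  if l is g :: l' then [&& arg1 g < base, arg2 g < base & wf_instrs base.+1 l']
  else true.

Lemma wf_instrs_cat base l1 l2 :
  wf_instrs base (l1 ++ l2) = wf_instrs base l1 && wf_instrs (base + size l1) l2.
Proof.
elim: l1 base => [|g l IHl] base /=; first by rewrite addn0.
by rewrite IHl addSnnS !andbA.
Qed.

Definition last_out_slp (l : seq instr) : slp := SLP l (size l).-1.

Lemma wf_last_out_slp n l :
  wf_instrs n l -> 0 < size l -> wf_slp n (last_out_slp l).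
Proof.
move=> wf_l l_gt0; split=> //=; last by rewrite prednK.
elim: l n wf_l {l_gt0} => [|g l IHl] n //= /and3P[lt1 lt2 wf_l] [|j] lt_j /=.
  by rewrite addn0; split.
by rewrite -addSnnS; apply: IHl.
Qed.

Lemma eval_last_out_slp n l (x : n.-tuple bool) :
  0 < size l -> slp_eval (last_out_slp l) x = last false (run x l).
Proof.
move=> l_gt0; rewrite /slp_eval -nth_last size_run size_tuple /=.
by rewrite -!subn1 addnBA.
Qed.

Lemma count_take_nth (s : seq bool) i : i < size s ->
  count id (take i.+1 s) = count id (take i s) + nth false s i.
Proof. by move=> lt_i; rewrite (take_nth false) // -cats1 count_cat /= addn0. Qed.

Lemma nth_cat_size (s t : seq bool) i : nth false (s ++ t) (size s + i) = nth false t i.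
Proof. by rewrite nth_cat ltnNge leq_addr addKn. Qed.

Definition nor (u v : bool) : bool := ~~ (u || v).

Definition code3 (a b : bool) : nat := if b then 1 else if a then 2 else 0.

Lemma code3_addb a x : code3 a (a (+) x) = (a + x) %% 3.
Proof. by case: a; case: x. Qed.

Lemma code3_absorb a b x : code3 (b (+) x) (nor b (a (+) x)) = (code3 a b + x + 1) %% 3.
Proof. by case: a; case: b; case: x. Qed.

(* In both blocks s must be the number of wires before the block: their last
   gates read the block's own first gates. *)
Definition absorb_block (a b w s : nat) : seq instr :=
  [:: Instr addb a w; Instr addb b w; Instr nor b s].

Lemma run_absorb_block vs a b w :
  b < size vs -> w < size vs ->
  let: (p, q, x) := (nth false vs a, nth false vs b, nth false vs w) in
  run vs (absorb_block a b w (size vs)) = vs ++ [:: p (+) x; q (+) x; nor q (p (+) x)].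
Proof.
move=> lt_b lt_w; rewrite /run /= /exec_instr.
have lt_b1 : b < (size vs).+1 by apply: ltnW.
rewrite !nth_rcons !size_rcons lt_b lt_w lt_b1 ltnn ltnSn eqxx /=.
by rewrite -!cats1 -!catA.
Qed.

Definition test_block (rho a b w s : nat) : seq instr :=
  match rho with
  | 0 => [:: Instr addb a w; Instr nor b s]
  | 1 => [:: Instr (fun u v => u && ~~ v) a b; Instr addb b w;
             Instr (fun u v => ~~ u && v) s s.+1]
  | _ => [:: Instr nor a b; Instr addb b w; Instr nor s s.+1]
  end.

Lemma size_test_block rho a b w s : size (test_block rho a b w s) = 3 - (rho == 0).
Proof. by case: rho => [|[|]]. Qed.

Lemma last_run_test_block vs rho a b w :
  rho < 3 -> b < size vs -> w < size vs ->
  last false (run vs (test_block rho a b w (size vs))) =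
  (code3 (nth false vs a) (nth false vs b) + nth false vs w == rho %[mod 3]).
Proof.
move=> lt_rho lt_b lt_w; have lt_b1 : b < (size vs).+1 by apply: ltnW.
rewrite /run; case: rho lt_rho => [|[|[|//]]] _ /=;
  rewrite /exec_instr /= !last_rcons !nth_rcons ?size_rcons;
  rewrite ?lt_b ?lt_w ?lt_b1 ?ltnn ?ltnSn ?eqxx /=;
  move: (nth false vs a) (nth false vs b) (nth false vs w) => p q x;
  by case: p; case: q; case: x.
Qed.

Lemma wf_absorb_block a b w s :
  a < s -> b < s -> w < s -> wf_instrs s (absorb_block a b w s).
Proof. by rewrite /=; lia. Qed.

Lemma wf_test_block rho a b w s :
  a < s -> b < s -> w < s -> wf_instrs s (test_block rho a b w s).
Proof. by case: rho => [|[|_]] /=; lia. Qed.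

Section Counter.

Variable n : nat.

Definition counter_wires k := n + (3 * k).+1.

Definition counter_a k := if k is k'.+1 then counter_wires k' + 1 else 0.
Definition counter_b k := if k is k'.+1 then counter_wires k' + 2 else n.

Fixpoint counter_instrs k : seq instr :=
  if k is k'.+1 then
    counter_instrs k' ++
    absorb_block (counter_a k') (counter_b k') k'.+2 (counter_wires k')
  else [:: Instr addb 0 1].

Lemma size_counter_instrs k : size (counter_instrs k) = (3 * k).+1.
Proof. by elim: k => //= k IHk; rewrite size_cat IHk mulnS -addn3 addSn addnC. Qed.

Lemma counter_a_lt k : counter_a k < counter_wires k.
Proof. by case: k => [|k] /=; rewrite /counter_wires; lia. Qed.

Lemma counter_b_lt k : counter_b k < counter_wires k.
Proof. by case: k => [|k] /=; rewrite /counter_wires; lia. Qed.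

Lemma wf_counter_instrs k : k.+2 <= n -> wf_instrs n (counter_instrs k).
Proof.
elim: k => [|k IHk] lt_k /=; first by rewrite !(leq_trans _ lt_k).
rewrite wf_instrs_cat IHk ?(ltnW lt_k) // size_counter_instrs.
apply: wf_absorb_block; rewrite ?counter_a_lt ?counter_b_lt //.
by rewrite /counter_wires (leq_trans lt_k) ?leq_addr.
Qed.

Lemma size_run_counter (x : n.-tuple bool) k :
  size (run x (counter_instrs k)) = counter_wires k.
Proof. by rewrite size_run size_tuple size_counter_instrs. Qed.

Lemma code3_run_counter (x : n.-tuple bool) k : k.+2 <= n ->
  let vs := run x (counter_instrs k) in
  code3 (nth false vs (counter_a k)) (nth false vs (counter_b k)) =
  (count id (take k.+2 x) + k) %% 3.
Proof.
have size_x : size x = n by rewrite size_tuple.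
elim: k => [|k IHk] lt_k /=.
  rewrite /run /= /exec_instr /= !nth_rcons size_x ltnn eqxx (leq_trans _ lt_k) //.
  rewrite code3_addb addn0.
  by rewrite !count_take_nth ?size_x ?(leq_trans _ lt_k) // take0.
set vs := run x (counter_instrs k).
have size_vs : size vs = counter_wires k := size_run_counter x k.
have lt_b : counter_b k < size vs by rewrite size_vs counter_b_lt.
have lt_w : k.+2 < size vs by rewrite size_vs /counter_wires ltn_addr.
rewrite run_cat -/vs -size_vs run_absorb_block // !nth_cat_size /=.
rewrite code3_absorb IHk ?(ltnW lt_k) // -addnA modnDml nth_run ?size_x //.
by rewrite (count_take_nth _ k.+2) ?size_x //; f_equal; lia.
Qed.

End Counter.

Definition mod3_instrs n r : seq instr :=
  let m := n - 3 in
  counter_instrs n m ++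
  test_block ((n + r) %% 3) (counter_a n m) (counter_b n m) n.-1 (counter_wires n m).

Lemma size_mod3_instrs n r : 3 <= n ->
  size (mod3_instrs n r) = 3 * n - 5 - ((n + r) %% 3 == 0).
Proof.
move=> n_ge3; rewrite size_cat size_counter_instrs size_test_block.
by case: (_ == 0); lia.
Qed.

Lemma wf_mod3_instrs n r : 3 <= n -> wf_instrs n (mod3_instrs n r).
Proof.
move=> n_ge3; rewrite wf_instrs_cat wf_counter_instrs ?size_counter_instrs; last by lia.
by apply: wf_test_block; rewrite ?counter_a_lt ?counter_b_lt // /counter_wires; lia.
Qed.

Lemma eqn_mod_shift d c x m r :
  ((c + m) %% d + x == m + d + r %[mod d]) = (c + x == r %[mod d]).
Proof.
by rewrite modnDml (addnAC c) (addnAC m) modnDr (addnC m) eqn_modDr.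
Qed.

Lemma eval_mod3_instrs n r (x : n.-tuple bool) : 3 <= n ->
  last false (run x (mod3_instrs n r)) = MODf 3 r x.
Proof.
move=> n_ge3; set m := n - 3; have size_x : size x = n by rewrite size_tuple.
set vs := run x (counter_instrs n m).
have size_vs : size vs = counter_wires n m := size_run_counter _ x m.
have lt_b : counter_b n m < size vs by rewrite size_vs counter_b_lt.
have lt_w : n.-1 < size vs by rewrite size_vs /counter_wires; lia.
rewrite /mod3_instrs -/m run_cat -/vs -size_vs last_run_test_block ?ltn_pmod //.
rewrite code3_run_counter; last by rewrite /m; lia.
rewrite nth_run ?size_x; last by lia.
have count_x : count id x = count id (take m.+2 x) + nth false x n.-1.
  have -> : n.-1 = m.+2 by rewrite /m; lia.
  by rewrite -count_take_nth ?take_oversize // size_x /m; lia.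
have -> : n + r = m + 3 + r by rewrite /m; lia.
by rewrite /MODf count_x modn_mod eqn_mod_shift.
Qed.

Theorem theorem1 (n r : nat) (hn : 3 <= n) (hr : r < 3) :
  circuit_size_le (@MODf n 3 r) (3 * n - 5 - ((n + r) %% 3 == 0)).
Proof.
exists (last_out_slp (mod3_instrs n r)).
have size_gt0 : 0 < size (mod3_instrs n r) by rewrite size_cat size_counter_instrs.
split; last by rewrite /slp_size size_mod3_instrs.
split; first exact: wf_last_out_slp _ _ (wf_mod3_instrs n r hn) size_gt0.
by move=> x; rewrite eval_last_out_slp // eval_mod3_instrs.
Qed.
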